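(* Let $D$ and $m$ be positive integers, $G$ a connected graph of maximum degree at most $D$, and $S_1,\dots,S_m$ pairwise disjoint subsets of $V(G)$, each of size at least $2+(D-1)(m-1)$. Then there exist pairwise vertex-disjoint paths $P_1,\dots,P_m$ in $G$ such that for each $1\le i\le m$, $P_i$ has two distinct endpoints, both belonging to $S_i$. *)

From mathcomp Require Import all_boot.
Set Implicit Arguments. Unset Strict Implicit. Unset Printing Implicit Defensive.

Definition simple_graph (T : finType) (e : rel T) : Prop :=
  symmetric e /\ irreflexive e.

Definition graph_connected (T : finType) (e : rel T) : Prop :=
  forall x y : T, connect e x y.

Definition max_degree_le (T : finType) (e : rel T) (D : nat) : Prop :=
  forall x : T, #|[set y | e x y]| <= D.

Definition gpath (T : finType) (e : rel T) (p : seq T) : bool :=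
  if p is x :: q then path e x q && uniq p else false.

Definition ends_in (T : finType) (p : seq T) (S : {set T}) : Prop :=
  exists x q, p = x :: q /\ x \in S /\ last x q \in S /\ x != last x q.

From mathcomp Require Import all_boot.

(* Induct on m inside a connected vertex set A, initially all of V(G).  Pick a
   smallest C in A such that C and A \ C are connected and C contains two
   vertices of some S_i.  By minimality, for a vertex v of C having a
   neighbour in A \ C (any v if C = A), every component of C - v meets each
   S_k at most once, so C meets S_k in at most deg_C(v) vertices besides v.
   When m >= 2 this rules out C = A, and for a boundary vertex v we get
   deg_C(v) <= D - 1.  Join two vertices of S_i by a path inside C: every
   other S_k loses at most D - 1 vertices, and the induction hypothesis
   applies to A \ C. *)

Set Implicit Arguments. Unset Strict Implicit. Unset Printing Implicit Defensive.

Lemma connect_cross (T : finType) (r : rel T) (X : {pred T}) a b :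
  connect r a b -> a \in X -> b \notin X -> exists x y, [/\ x \in X, y \notin X & r x y].
Proof.
move=> /connectP[p pth ->]; elim: p a pth => /= [a _ aX|y p IH a /andP[ray pth] aX bX].
  by rewrite aX.
case yX: (y \in X); first exact: IH pth yX bX.
by exists a, y; rewrite yX.
Qed.

Lemma card_setI_setD (T : finType) (S A C : {set T}) :
  C \subset A -> #|S :&: C| + #|S :&: (A :\: C)| = #|S :&: A|.
Proof.
move=> CA; rewrite -(cardsID C (S :&: A)) setIDA; congr (#|_| + _).
by rewrite -setIA (setIidPr CA).
Qed.

Section InducedSubgraphs.
Variables (T : finType) (e : rel T).
Hypothesis esym : symmetric e.

Definition induced (B : {set T}) : rel T := fun x y => [&& x \in B, y \in B & e x y].

Definition connectedb (B : {set T}) : bool :=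
  [forall x in B, forall y in B, connect (induced B) x y].

Definition component (B : {set T}) (w : T) : {set T} :=
  [set y in B | connect (induced B) w y].

Definition nbrs_in (B : {set T}) (v : T) : {set T} := [set w in B :\ v | e v w].

Lemma connectedbP (B : {set T}) :
  reflect {in B &, forall x y, connect (induced B) x y} (connectedb B).
Proof.
apply: (iffP forall_inP) => [H x y xB yB | H x xB].
  by move/forall_inP: (H x xB); apply.
by apply/forall_inP => y yB; apply: H.
Qed.

Lemma connect_inducedC (B : {set T}) x y :
  connect (induced B) x y = connect (induced B) y x.
Proof.
apply: sym_connect_sym => {}x {}y.
by rewrite /induced esym; case: (x \in B); case: (y \in B).
Qed.

Lemma connect_induced_subset (B B' : {set T}) x y :
  B \subset B' -> connect (induced B) x y -> connect (induced B') x y.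
Proof.
move=> sBB' /connectP[p pth ->]; apply/connectP; exists p => //.
apply: sub_path pth => a b /and3P[aB bB eab].
by rewrite /induced (subsetP sBB' a aB) (subsetP sBB' b bB).
Qed.

Lemma path_induced_subset (B : {set T}) a p : path (induced B) a p -> {subset p <= B}.
Proof.
elim: p a => //= y p IH a /andP[/and3P[_ yB _] pth] z.
by rewrite inE => /orP[/eqP->//|]; apply: IH pth z.
Qed.

Lemma component_subset (B : {set T}) w : component B w \subset B.
Proof. by apply/subsetP => y; rewrite inE => /andP[]. Qed.

Lemma connect_component (B : {set T}) w x :
  connect (induced B) w x -> connect (induced (component B w)) w x.
Proof.
suff H p z : connect (induced B) w z -> path (induced B) z p ->
    connect (induced (component B w)) z (last z p).
  by move=> /connectP[p pth ->]; apply: H pth.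
elim: p z => [|y p IH] z cwz /=; first by move=> _; apply: connect0.
move=> /andP[rzy pth]; have cwy := connect_trans cwz (connect1 rzy).
apply: connect_trans (IH y cwy pth); apply: connect1.
by move/and3P: rzy => [zB yB ezy]; rewrite /induced !inE zB yB cwz cwy ezy.
Qed.

Lemma component_connected (B : {set T}) w : connectedb (component B w).
Proof.
have H x : x \in component B w -> connect (induced (component B w)) w x.
  by rewrite inE => /andP[_ /connect_component].
by apply/connectedbP => x y /H cwx /H cwy; apply: connect_trans cwy; rewrite connect_inducedC.
Qed.

Lemma connect_from_nbr (C : {set T}) v x : connectedb C -> v \in C -> x \in C -> x != v ->
  exists2 w, w \in nbrs_in C v & connect (induced (C :\ v)) w x.
Proof.
move=> /connectedbP Cc vC xC xv.
have xK : x \in component (C :\ v) x by rewrite !inE xv xC connect0.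
have vK : v \notin component (C :\ v) x by rewrite !inE eqxx.
have [y1 [y2 [y1K y2K /and3P[y1C y2C e12]]]] := connect_cross (Cc x v xC vC) xK vK.
move: (y1K); rewrite !inE => /andP[/andP[y1v _] cxy1].
have [y2v|y2v] := eqVneq y2 v.
  exists y1; first by rewrite !inE y1v y1C -esym -y2v e12.
  by rewrite connect_inducedC.
case/negP: y2K; rewrite !inE y2v y2C /=.
by apply: connect_trans cxy1 (connect1 _); rewrite /induced !inE y1v y1C y2v y2C e12.
Qed.

Lemma connected_setD_component (A C : {set T}) v w :
  C \subset A -> connectedb C -> connectedb (A :\: C) -> v \in C ->
  (forall z, z \in A :\: C -> exists2 u, u \in A :\: C & e v u) ->
  w \in C :\ v -> connectedb (A :\: component (C :\ v) w).
Proof.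
move=> CA Cc ACc vC vAC wCv; set K := component (C :\ v) w.
have KC : K \subset C :\ v := component_subset _ _.
have vK : v \in A :\: K.
  by rewrite inE (subsetP CA v vC) andbT; apply/negP => /(subsetP KC); rewrite !inE eqxx.
suff to_v z : z \in A :\: K -> connect (induced (A :\: K)) z v.
  apply/connectedbP => x y /to_v cxv /to_v cyv.
  by apply: connect_trans cxv _; rewrite connect_inducedC.
move=> zK; case zC: (z \in C).
  have [->|zv] := eqVneq z v; first exact: connect0.
  have [w' w'N cw'z] := connect_from_nbr Cc vC zC zv.
  move: w'N; rewrite !inE => /andP[/andP[w'v w'C] evw'].
  set Z := component (C :\ v) z.
  have czw' : connect (induced (C :\ v)) z w' by rewrite connect_inducedC.
  have ZK : Z \subset A :\: K.
    apply/subsetP => y; rewrite !inE => /andP[/andP[yv yC] czy].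
    rewrite (subsetP CA y yC) andbT yv yC /=; move: (zK).
    rewrite !inE zv zC /= => /andP[+ _]; apply: contraNN => cwy.
    by apply: connect_trans cwy _; rewrite connect_inducedC.
  apply: connect_trans (connect_induced_subset ZK (connect_component czw')) (connect1 _).
  have w'Z : w' \in Z by rewrite !inE w'v w'C czw'.
  by rewrite /induced vK (subsetP ZK w' w'Z) esym evw'.
have zAC : z \in A :\: C by move: zK; rewrite !inE zC => /andP[_ ->].
have [u uAC evu] := vAC z zAC.
have sub : A :\: C \subset A :\: K.
  by apply: setDS; apply: subset_trans KC (subsetDl _ _).
apply: connect_trans (connect_induced_subset sub (connectedbP _ ACc z u zAC uAC)) (connect1 _).
by rewrite /induced vK (subsetP sub u uAC) esym evu.
Qed.

Lemma connected_gpath (C P : {set T}) a b : connectedb C ->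
  a \in P :&: C -> b \in P :&: C -> a != b ->
  exists p, [/\ gpath e p, ends_in p P & {subset p <= C}].
Proof.
move=> Cc; rewrite !inE => /andP[aP aC] /andP[bP bC] ab.
have /connectP[p pth bE] := connectedbP _ Cc a b aC bC.
move: bP ab; rewrite bE; case: (shortenP pth) => q qth quniq _ bP ab.
exists (a :: q); split.
- by rewrite /gpath quniq andbT; apply: sub_path qth => x y /and3P[].
- by exists a, q.
- by move=> z; rewrite inE => /orP[/eqP->//|]; apply: path_induced_subset qth z.
Qed.

Definition linkage n (S : 'I_n -> {set T}) (A : {set T}) (P : 'I_n -> seq T) : Prop :=
  (forall i, [/\ gpath e (P i), ends_in (P i) (S i) & {subset P i <= A}]) /\
  (forall i j, i != j -> [disjoint P i & P j]).

Lemma linkage_insert n (S : 'I_n.+1 -> {set T}) (A X Y : {set T}) i p P' :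
  X \subset A -> Y \subset A -> [disjoint X & Y] ->
  [/\ gpath e p, ends_in p (S i) & {subset p <= X}] ->
  linkage (fun j => S (lift i j)) Y P' -> exists P, linkage S A P.
Proof.
move=> XA YA XY [p_path p_ends pX] [P'_ok P'_dis].
have sub_pY j : [disjoint p & P' j].
  have [_ _ P'Y] := P'_ok j.
  by apply: disjointW XY; apply/subsetP => z; [apply: pX | apply: P'Y].
exists (fun k => if unlift i k is Some j then P' j else p); split.
  move=> k; case: unliftP => [j ->|->]; last by split => // z /pX/(subsetP XA).
  by have [P'j_path P'j_ends P'jY] := P'_ok j; split => // z /P'jY/(subsetP YA).
move=> k k'; case: unliftP => [j ->|->]; case: unliftP => [j' ->|->] //.
- by rewrite (inj_eq (@lift_inj _ i)); apply: P'_dis.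
- by move=> _; rewrite disjoint_sym; apply: sub_pY.
- by move=> /negP[].
Qed.

Section BoundedDegree.
Variable D : nat.
Hypothesis maxdeg : max_degree_le e D.

Lemma card_nbrs_in_le (B : {set T}) v : #|nbrs_in B v| <= D.
Proof.
apply: leq_trans (maxdeg v); apply: subset_leq_card.
by apply/subsetP => w; rewrite !inE => /andP[_ ->].
Qed.

Lemma card_nbrs_in_lt (B : {set T}) v u : u \notin B -> e v u -> #|nbrs_in B v| < D.
Proof.
move=> uB evu; apply: leq_trans (maxdeg v); apply: proper_card; apply/properP; split.
  by apply/subsetP => w; rewrite !inE => /andP[_ ->].
by exists u; rewrite !inE ?evu // (negbTE uB) andbF.
Qed.

Section MinimalPiece.
Variables (n : nat) (S : 'I_n -> {set T}) (A : {set T}).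

Definition piece (C : {set T}) : bool :=
  [&& C \subset A, connectedb C, connectedb (A :\: C) & [exists k, 1 < #|S k :&: C|]].

Variable C : {set T}.
Hypothesis Cpiece : piece C.
Hypothesis Cmin : forall K, piece K -> #|C| <= #|K|.

Section AttachedVertex.
Variable v : T.
Hypothesis vC : v \in C.
Hypothesis v_attached : forall z, z \in A :\: C -> exists2 u, u \in A :\: C & e v u.

Lemma card_S_component_le1 w k : w \in C :\ v -> #|S k :&: component (C :\ v) w| <= 1.
Proof.
move=> wCv; set K := component (C :\ v) w.
have /and4P[CA Cc ACc _] := Cpiece.
have KC : K \subset C by apply: subset_trans (component_subset _ _) (subsetDl _ _).
have ltKC : #|K| < #|C|.
  apply: proper_card; apply/properP; split => //; exists v => //.
  by rewrite !inE eqxx.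
have : ~~ piece K by apply: contraTN ltKC => /Cmin; rewrite leqNgt.
rewrite /piece (subset_trans KC CA) component_connected.
rewrite (connected_setD_component CA Cc ACc vC v_attached wCv) /=.
by move=> /existsPn/(_ k); rewrite -leqNgt.
Qed.

Lemma card_S_piece_le k : #|S k :&: C| <= (v \in S k) + #|nbrs_in C v|.
Proof.
have /and4P[_ Cc _ _] := Cpiece.
rewrite (cardsD1 v) inE vC andbT leq_add2l.
set X := (S k :&: C) :\ v.
pose f x := odflt v [pick w in nbrs_in C v | connect (induced (C :\ v)) w x].
have fX x : x \in X -> f x \in nbrs_in C v /\ connect (induced (C :\ v)) (f x) x.
  move=> /setD1P[xv /setIP[_ xC]]; rewrite /f.
  case: pickP => [w /andP[wN cwx] | none] /=; first by split.
  have [w wN cwx] := connect_from_nbr Cc vC xC xv.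
  by move: (none w); rewrite wN cwx.
have f_inj : {in X &, injective f}.
  move=> x y xX yX fxy; have [fN cfx] := fX x xX; have [_ cfy] := fX y yX.
  rewrite -fxy in cfy.
  have fCv : f x \in C :\ v by move: fN; rewrite inE => /andP[].
  have inK z : z \in X -> connect (induced (C :\ v)) (f x) z ->
      z \in S k :&: component (C :\ v) (f x).
    by move=> /setD1P[zv /setIP[zS zC]] cfz; rewrite !inE zS zv zC cfz.
  by apply: (card_le1_eqP (card_S_component_le1 k fCv)); apply: inK.
rewrite -(card_in_imset f_inj); apply: subset_leq_card.
by apply/subsetP => y /imsetP[x /fX[fxN _] ->].
Qed.

End AttachedVertex.

Hypothesis Sdis : forall i j, i != j -> [disjoint S i & S j].

Lemma piece_proper : 1 < n -> (forall k, D < #|S k :&: A|) -> ~~ (A \subset C).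
Proof.
move=> n_gt1 Sbig; apply/negP => AC; have /and4P[CA _ _ _] := Cpiece.
have AeC : A = C by apply/eqP; rewrite eqEsubset CA AC.
pose k1 : 'I_n := Ordinal (ltnW n_gt1); pose k2 : 'I_n := Ordinal n_gt1.
have [v /setIP[vS1 vC]] : exists v, v \in S k1 :&: C.
  by apply/card_gt0P; rewrite -AeC; apply: leq_ltn_trans (Sbig k1).
have vS2 : v \in S k2 = false := disjointFr (Sdis (isT : k1 != k2)) vS1.
have noz z : z \in A :\: C -> exists2 u, u \in A :\: C & e v u by rewrite AeC setDv inE.
have := card_S_piece_le vC noz k2; rewrite vS2 add0n.
by move=> /leq_trans/(_ (card_nbrs_in_le C v)); rewrite -AeC leqNgt Sbig.
Qed.

Lemma exists_piece_index v u : v \in C -> u \in A :\: C -> e v u ->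
  exists2 i, 1 < #|S i :&: C| & forall k, k != i -> #|S k :&: C| <= D - 1.
Proof.
move=> vC uAC evu; have /and4P[_ Cc _ /existsP[k0 Ck0]] := Cpiece.
have attached z : z \in A :\: C -> exists2 u, u \in A :\: C & e v u by exists u.
have [i Ci Sv1] : exists2 i, 1 < #|S i :&: C| &
    forall k, k != i -> v \in S k -> #|S k :&: C| <= 1.
  case: (pickP (fun j => (v \in S j) && (1 < #|S j :&: C|))) => [i /andP[vi Ci] | none].
    exists i => // k ki vk.
    by have := disjointFr (Sdis ki) vk; rewrite vi.
  exists k0 => // k _ vk; move: (none k); rewrite vk /= => /negbT; by rewrite -leqNgt.
have N_pos : 0 < #|nbrs_in C v|.
  have [x xSC xv] : exists2 x, x \in S i :&: C & x != v.
    case/card_gt1P: Ci => a [b [aSC bSC ab]].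
    have [av|av] := eqVneq a v; last by exists a.
    by exists b; rewrite // -av eq_sym.
  have [w wN _] := connect_from_nbr Cc vC (setIP xSC).2 xv.
  by apply/card_gt0P; exists w.
have N_lt : #|nbrs_in C v| < D.
  by apply: card_nbrs_in_lt evu; move: uAC; rewrite inE => /andP[].
exists i => // k ki; rewrite subn1 -ltnS (ltn_predK N_lt); apply: leq_ltn_trans N_lt.
have := card_S_piece_le vC attached k; case vk: (v \in S k) => // _.
exact: leq_trans (Sv1 k ki vk) N_pos.
Qed.

End MinimalPiece.

Lemma linkage_in_connected n (A : {set T}) (S : 'I_n -> {set T}) :
  connectedb A -> (forall i j, i != j -> [disjoint S i & S j]) ->
  (forall i, 2 + (D - 1) * (n - 1) <= #|S i :&: A|) ->
  exists P, linkage S A P.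
Proof.
elim: n A S => [|n IH] A S Ac Sdis Ssz; first by exists (fun _ => [::]); split => [[]|[]].
have A_piece : piece S A A.
  rewrite /piece subxx Ac setDv /=; apply/andP; split.
    by apply/connectedbP => x y; rewrite inE.
  by apply/existsP; exists ord0; apply: leq_trans _ (Ssz ord0); rewrite leq_addr.
case: (arg_minnP (fun C : {set T} => #|C|) A_piece) => C C_piece Cmin.
have /and4P[CA Cc ACc /existsP[k0 Ck0]] := C_piece.
have path_in_C i : 1 < #|S i :&: C| ->
    exists p, [/\ gpath e p, ends_in p (S i) & {subset p <= C}].
  by case/card_gt1P => a [b [aSC bSC ab]]; apply: connected_gpath Cc aSC bSC ab.
have [n0|n_pos] := posnP n.
  subst n; have [p p_ok] := path_in_C k0 Ck0.
  apply: (@linkage_insert 0 S A C set0 k0 p (fun _ => [::])) => //.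
  - exact: sub0set.
  - by rewrite disjoints_subset setC0 subsetT.
  by split => [[]|[]].
have /subsetPn[a aA aC] : ~~ (A \subset C).
  apply: piece_proper C_piece Cmin Sdis _ _ => // k; apply: leq_trans (Ssz k).
  rewrite subSS subn0 add2n ltnS; apply: leq_trans (leqSpred D) _.
  by rewrite ltnS -subn1 leq_pmulr.
have [c cSC] : exists c, c \in S k0 :&: C by apply/card_gt0P; apply: ltnW.
have [v [u [vC uC /and3P[_ uA evu]]]] :=
  connect_cross (connectedbP _ Ac _ _ (subsetP CA c (setIP cSC).2) aA) (setIP cSC).2 aC.
have uAC : u \in A :\: C by rewrite inE uC uA.
have [i Ci Sk_small] := exists_piece_index C_piece Cmin Sdis vC uAC evu.
have [P' P'_ok] : exists P', linkage (fun j => S (lift i j)) (A :\: C) P'.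
  apply: IH => // [j j' jj'|j]; first by apply: Sdis; rewrite (inj_eq (@lift_inj _ i)).
  have := Ssz (lift i j); rewrite -(card_setI_setD _ CA).
  have := Sk_small (lift i j); rewrite eq_sym neq_lift => /(_ isT) SC_small.
  have -> : (D - 1) * (n.+1 - 1) = (D - 1) * (n - 1) + (D - 1).
    by rewrite subSS subn0 -mulnSr subnSK ?subn0.
  rewrite addnA => size_ok; rewrite -(leq_add2r (D - 1)); apply: leq_trans size_ok _.
  by rewrite addnC leq_add2l.
have [p p_ok] := path_in_C i Ci.
apply: (linkage_insert CA (subsetDl A C) _ p_ok P'_ok).
by rewrite disjoints_subset; apply/subsetP => x xC; rewrite !inE xC.
Qed.

End BoundedDegree.

End InducedSubgraphs.

Theorem lemma6p4 (D m : nat) (T : finType) (e : rel T) (S : 'I_m -> {set T}) :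
  0 < D -> 0 < m ->
  simple_graph e -> graph_connected e -> max_degree_le e D ->
  (forall i j : 'I_m, i != j -> [disjoint S i & S j]) ->
  (forall i : 'I_m, 2 + (D - 1) * (m - 1) <= #|S i|) ->
  exists P : 'I_m -> seq T,
    (forall i : 'I_m, gpath e (P i) /\ ends_in (P i) (S i)) /\
    (forall i j : 'I_m, i != j -> [disjoint P i & P j]).
Proof.
move=> _ _ [esym _] Gconn maxdeg Sdis Ssz.
have T_conn : connectedb e [set: T].
  apply/connectedbP => x y _ _; rewrite (eq_connect (e' := e)) //.
  by move=> a b; rewrite /induced !inE.
have [|P [P_ok P_dis]] := linkage_in_connected esym maxdeg T_conn Sdis.
  by move=> i; rewrite setIT.
by exists P; split=> // i; have [] := P_ok i.
Qed.
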